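(* Let $\mathcal{A}$ be an additive category with maximal exact structure $\mathcal{E}_{max}$, and let $\mathcal{W}_1,\mathcal{W}_2$ be weakly exact structures contained in $\mathcal{E}_{max}$. Define $\mathcal{W}_1+\mathcal{W}_2=\bigcup_{A,C}\{\eta_1+\eta_2\mid \eta_1\in\mathcal{W}_1(C,A),\ \eta_2\in\mathcal{W}_2(C,A)\}$, where $\mathcal{W}_k(C,A)$ is the class of sequences $A\to B\to C$ in $\mathcal{W}_k$ and $\eta_1+\eta_2=\nabla_A(\eta_1\oplus\eta_2)\Delta_C$ is the Baer sum (computed in $\mathcal{E}_{max}$, and closed under isomorphism). Then (a) $\mathcal{W}_1+\mathcal{W}_2$ is a weakly exact structure, and (b) it is the smallest weakly exact structure containing $\mathcal{W}_1$ and $\mathcal{W}_2$, i.e. it equals $\bigcap\{\mathcal{V}\ \text{weakly exact}\mid \mathcal{W}_1\subseteq\mathcal{V},\ \mathcal{W}_2\subseteq\mathcal{V}\}$, the join in the lattice of weakly exact structures contained in $\mathcal{E}_{max}$.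
   Context: Let $\mathcal{A}$ be an additive category. A kernel-cokernel pair is $A\xrightarrow{i}B\xrightarrow{d}C$ with $i$ a kernel of $d$ and $d$ a cokernel of $i$. A weakly exact structure on $\mathcal{A}$ is a class $\mathcal{W}$ of kernel-cokernel pairs, closed under isomorphisms of sequences and under finite direct sums of sequences, such that, calling $i$ an admissible monic (resp. $d$ an admissible epic) if $(i,d)\in\mathcal{W}$ for some $d$ (resp. some $i$): (E0) $1_A$ is an admissible monic for every $A$; (E0)$^{op}$ $1_A$ is an admissible epic for every $A$; (E2) pushouts of admissible monics along arbitrary morphisms exist and are admissible monics; (E2)$^{op}$ pullbacks of admissible epics along arbitrary morphisms exist and are admissible epics. An exact structure is such a class (closed under isomorphisms, satisfying (E0), (E0)$^{op}$, (E2), (E2)$^{op}$) in which admissible monics and admissible epics are closed under composition; $\mathcal{E}_{max}$ is the unique maximal exact structure on $\mathcal{A}$. $\nabla_A:A\oplus A\to A$ is the codiagonal, $\Delta_C:C\to C\oplus C$ the diagonal; $\nabla_A(\cdot)$ denotes pushout along $\nabla_A$ and $(\cdot)\Delta_C$ pullback along $\Delta_C$. *)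

From HB Require Import structures.
From mathcomp Require Import all_boot all_algebra.
Set Implicit Arguments. Unset Strict Implicit. Unset Printing Implicit Defensive.
Import GRing.Theory.
Local Open Scope ring_scope.

Record PreAdditive := {
  Ob :> Type;
  HomC : Ob -> Ob -> zmodType;
  idm : forall A : Ob, HomC A A;
  comp : forall {A B C : Ob}, HomC B C -> HomC A B -> HomC A C;
  comp_assoc : forall (A B C D : Ob) (h : HomC C D) (g : HomC B C) (f : HomC A B),
      comp h (comp g f) = comp (comp h g) f;
  comp_id_l : forall (A B : Ob) (f : HomC A B), comp (idm B) f = f;
  comp_id_r : forall (A B : Ob) (f : HomC A B), comp f (idm A) = f;
  comp_addl : forall (A B C : Ob) (g g' : HomC B C) (f : HomC A B),
      comp (g + g') f = comp g f + comp g' f;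
  comp_addr : forall (A B C : Ob) (g : HomC B C) (f f' : HomC A B),
      comp g (f + f') = comp g f + comp g f'
}.

Arguments HomC {p}.
Arguments idm {p}.
Arguments comp {p A B C}.

Section Defs.
Variable K : PreAdditive.

Definition is_biproduct (X Y S : K) (i1 : HomC X S) (i2 : HomC Y S)
    (p1 : HomC S X) (p2 : HomC S Y) : Prop :=
  [/\ comp p1 i1 = idm X, comp p2 i2 = idm Y, comp p1 i2 = 0, comp p2 i1 = 0
    & comp i1 p1 + comp i2 p2 = idm S].

Definition is_additive : Prop :=
  (exists Z : K, idm Z = 0) /\
  (forall X Y : K, exists (S : K) (i1 : HomC X S) (i2 : HomC Y S)
     (p1 : HomC S X) (p2 : HomC S Y), is_biproduct i1 i2 p1 p2).

Definition dsum (X Y S X' Y' T : K)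
    (i1 : HomC X S) (i2 : HomC Y S) (p1 : HomC S X) (p2 : HomC S Y)
    (j1 : HomC X' T) (j2 : HomC Y' T) (q1 : HomC T X') (q2 : HomC T Y')
    (f : HomC X X') (g : HomC Y Y') : HomC S T :=
  comp j1 (comp f p1) + comp j2 (comp g p2).

Definition is_iso (X Y : K) (f : HomC X Y) : Prop :=
  exists g : HomC Y X, comp g f = idm X /\ comp f g = idm Y.

Definition is_kernel (A B C : K) (i : HomC A B) (d : HomC B C) : Prop :=
  comp d i = 0 /\
  forall (X : K) (f : HomC X B), comp d f = 0 -> exists! g : HomC X A, comp i g = f.

Definition is_cokernel (A B C : K) (d : HomC B C) (i : HomC A B) : Prop :=
  comp d i = 0 /\
  forall (X : K) (f : HomC B X), comp f i = 0 -> exists! g : HomC C X, comp g d = f.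

Definition kc_pair (A B C : K) (i : HomC A B) (d : HomC B C) : Prop :=
  is_kernel i d /\ is_cokernel d i.

Definition seqclass := forall A B C : K, HomC A B -> HomC B C -> Prop.

Definition subclass (W V : seqclass) : Prop :=
  forall (A B C : K) (i : HomC A B) (d : HomC B C), W A B C i d -> V A B C i d.

Definition iso_seq (A B C A' B' C' : K) (i : HomC A B) (d : HomC B C)
    (i' : HomC A' B') (d' : HomC B' C') : Prop :=
  exists (a : HomC A A') (b : HomC B B') (c : HomC C C'),
    [/\ is_iso a, is_iso b, is_iso c, comp b i = comp i' a & comp c d = comp d' b].

Definition kc_class (W : seqclass) : Prop :=
  forall (A B C : K) (i : HomC A B) (d : HomC B C), W A B C i d -> kc_pair i d.

Definition iso_closed (W : seqclass) : Prop :=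
  forall (A B C A' B' C' : K) (i : HomC A B) (d : HomC B C)
    (i' : HomC A' B') (d' : HomC B' C'),
    W A B C i d -> iso_seq i d i' d' -> W A' B' C' i' d'.

Definition dsum_closed (W : seqclass) : Prop :=
  forall (A B C A' B' C' : K) (i : HomC A B) (d : HomC B C)
    (i' : HomC A' B') (d' : HomC B' C'),
    W A B C i d -> W A' B' C' i' d' ->
    forall (SA SB SC : K)
      (a1 : HomC A SA) (a2 : HomC A' SA) (a1' : HomC SA A) (a2' : HomC SA A')
      (b1 : HomC B SB) (b2 : HomC B' SB) (b1' : HomC SB B) (b2' : HomC SB B')
      (c1 : HomC C SC) (c2 : HomC C' SC) (c1' : HomC SC C) (c2' : HomC SC C'),
      is_biproduct a1 a2 a1' a2' -> is_biproduct b1 b2 b1' b2' ->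
      is_biproduct c1 c2 c1' c2' ->
      W SA SB SC (dsum a1 a2 a1' a2' b1 b2 b1' b2' i i')
                 (dsum b1 b2 b1' b2' c1 c2 c1' c2' d d').

Definition adm_mono (W : seqclass) (A B : K) (i : HomC A B) : Prop :=
  exists (C : K) (d : HomC B C), W A B C i d.

Definition adm_epi (W : seqclass) (B C : K) (d : HomC B C) : Prop :=
  exists (A : K) (i : HomC A B), W A B C i d.

Definition is_pushout (A B A' P : K) (i : HomC A B) (f : HomC A A')
    (i' : HomC A' P) (f' : HomC B P) : Prop :=
  comp f' i = comp i' f /\
  forall (X : K) (u : HomC B X) (v : HomC A' X), comp u i = comp v f ->
    exists! w : HomC P X, comp w f' = u /\ comp w i' = v.

Definition is_pullback (B C C' Q : K) (d : HomC B C) (g : HomC C' C)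
    (d' : HomC Q C') (g' : HomC Q B) : Prop :=
  comp d g' = comp g d' /\
  forall (X : K) (u : HomC X B) (v : HomC X C'), comp d u = comp g v ->
    exists! w : HomC X Q, comp g' w = u /\ comp d' w = v.

Definition E0 (W : seqclass) : Prop := forall A : K, adm_mono W (idm A).
Definition E0op (W : seqclass) : Prop := forall A : K, adm_epi W (idm A).

Definition E2 (W : seqclass) : Prop :=
  forall (A B : K) (i : HomC A B), adm_mono W i ->
  forall (A' : K) (f : HomC A A'),
    (exists (P : K) (i' : HomC A' P) (f' : HomC B P), is_pushout i f i' f') /\
    (forall (P : K) (i' : HomC A' P) (f' : HomC B P),
        is_pushout i f i' f' -> adm_mono W i').

Definition E2op (W : seqclass) : Prop :=
  forall (B C : K) (d : HomC B C), adm_epi W d ->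
  forall (C' : K) (g : HomC C' C),
    (exists (Q : K) (d' : HomC Q C') (g' : HomC Q B), is_pullback d g d' g') /\
    (forall (Q : K) (d' : HomC Q C') (g' : HomC Q B),
        is_pullback d g d' g' -> adm_epi W d').

Definition weakly_exact (W : seqclass) : Prop :=
  [/\ kc_class W, iso_closed W, dsum_closed W,
      E0 W /\ E0op W & E2 W /\ E2op W].

Definition exact_structure (W : seqclass) : Prop :=
  [/\ kc_class W, iso_closed W, E0 W /\ E0op W, E2 W /\ E2op W &
      (forall (A B D : K) (i : HomC A B) (j : HomC B D),
          adm_mono W i -> adm_mono W j -> adm_mono W (comp j i)) /\
      (forall (A B D : K) (d : HomC A B) (e : HomC B D),
          adm_epi W d -> adm_epi W e -> adm_epi W (comp e d))].

Definition is_max_exact (E : seqclass) : Prop :=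
  exact_structure E /\ forall W : seqclass, exact_structure W -> subclass W E.

Definition pushout_seq (A B C A' P : K) (i : HomC A B) (d : HomC B C)
    (f : HomC A A') (i' : HomC A' P) (d' : HomC P C) : Prop :=
  exists f' : HomC B P, [/\ is_pushout i f i' f', comp d' f' = d & comp d' i' = 0].

Definition pullback_seq (A B C C' Q : K) (i : HomC A B) (d : HomC B C)
    (g : HomC C' C) (i' : HomC A Q) (d' : HomC Q C') : Prop :=
  exists g' : HomC Q B, [/\ is_pullback d g d' g', comp g' i' = i & comp d' i' = 0].

(* (i, d) is a Baer sum  nabla_A (eta1 (+) eta2) Delta_C  of eta1 = (i1,d1), eta2 = (i2,d2) *)
Definition baer_sum (A B1 B2 C Q : K) (i1 : HomC A B1) (d1 : HomC B1 C)
    (i2 : HomC A B2) (d2 : HomC B2 C) (i : HomC A Q) (d : HomC Q C) : Prop :=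
  exists (SA SB SC : K)
    (a1 : HomC A SA) (a2 : HomC A SA) (a1' : HomC SA A) (a2' : HomC SA A)
    (b1 : HomC B1 SB) (b2 : HomC B2 SB) (b1' : HomC SB B1) (b2' : HomC SB B2)
    (c1 : HomC C SC) (c2 : HomC C SC) (c1' : HomC SC C) (c2' : HomC SC C),
    [/\ is_biproduct a1 a2 a1' a2', is_biproduct b1 b2 b1' b2',
        is_biproduct c1 c2 c1' c2' &
        exists (P : K) (j : HomC A P) (e : HomC P SC),
          pushout_seq (dsum a1 a2 a1' a2' b1 b2 b1' b2' i1 i2)
                      (dsum b1 b2 b1' b2' c1 c2 c1' c2' d1 d2)
                      (a1' + a2') j e /\
          pullback_seq j e (c1 + c2) i d].

Definition sum_class (W1 W2 : seqclass) : seqclass :=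
  fun (A' Q' C' : K) (i' : HomC A' Q') (d' : HomC Q' C') =>
    exists (A B1 B2 C Q : K) (i1 : HomC A B1) (d1 : HomC B1 C)
      (i2 : HomC A B2) (d2 : HomC B2 C) (i : HomC A Q) (d : HomC Q C),
      [/\ W1 A B1 C i1 d1, W2 A B2 C i2 d2, baer_sum i1 d1 i2 d2 i d
        & iso_seq i d i' d'].

End Defs.

Arguments sum_class {K} W1 W2 A B C i d.

From Pilot Require Import Defs.
From mathcomp Require Import all_boot all_algebra.
Set Implicit Arguments. Unset Strict Implicit. Unset Printing Implicit Defensive.
Import GRing.Theory.
Local Open Scope ring_scope.

(* Membership of a Baer sum nabla_A (eta1 (+) eta2) Delta_C in a class only
   uses direct sums, pushouts and pullbacks, so every weakly exact V containing
   W1 and W2 contains W1 + W2 ([sum_class_least]).  The real work is to show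
   that W1 + W2 is weakly exact.  For this the Baer sum is replaced by a
   presentation ([baer_presentation]): a sequence xi of E_max with a morphism
   (1, r, Delta_C) to eta1 (+) eta2 and a morphism (al ⊚ nabla_A, rho, ga) to the
   given sequence.  A short five lemma for morphisms out of members of E_max
   shows that the presented kernel-cokernel pairs are exactly the members of
   W1 + W2; presentations are easily transported along isomorphisms,
   pushouts, pullbacks and direct sums, and eta in W1 is presented as
   eta + (split sequence), so W1 + W2 contains W1 and W2. *)

Notation "f ⊚ g" := (Defs.comp f g) (at level 40, left associativity).

Section Preadditive.
Variable K : PreAdditive.
Implicit Types A B C D X : K.

Lemma comp_rassoc A B C D (h : HomC C D) (g : HomC B C) (f : HomC A B) :
  (h ⊚ g) ⊚ f = h ⊚ (g ⊚ f).
Proof. by rewrite comp_assoc. Qed.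

Lemma compDl A B C (g g' : HomC B C) (f : HomC A B) : (g + g') ⊚ f = g ⊚ f + g' ⊚ f.
Proof. exact: comp_addl. Qed.

Lemma compDr A B C (g : HomC B C) (f f' : HomC A B) : g ⊚ (f + f') = g ⊚ f + g ⊚ f'.
Proof. exact: comp_addr. Qed.

Lemma comp1l A B (f : HomC A B) : idm B ⊚ f = f. Proof. exact: comp_id_l. Qed.
Lemma comp1r A B (f : HomC A B) : f ⊚ idm A = f. Proof. exact: comp_id_r. Qed.

Lemma comp0l A B C (f : HomC A B) : (0 : HomC B C) ⊚ f = 0.
Proof. by apply: (addrI ((0 : HomC B C) ⊚ f)); rewrite -compDl !addr0. Qed.

Lemma comp0r A B C (g : HomC B C) : g ⊚ (0 : HomC A B) = 0.
Proof. by apply: (addrI (g ⊚ (0 : HomC A B))); rewrite -compDr !addr0. Qed.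

Lemma compNl A B C (g : HomC B C) (f : HomC A B) : (- g) ⊚ f = - (g ⊚ f).
Proof. by apply: (addrI (g ⊚ f)); rewrite -compDl !subrr comp0l. Qed.

Lemma compNr A B C (g : HomC B C) (f : HomC A B) : g ⊚ (- f) = - (g ⊚ f).
Proof. by apply: (addrI (g ⊚ f)); rewrite -compDr !subrr comp0r. Qed.

Lemma comp_extend2 A B C (f : HomC B C) (g : HomC A B) (h : HomC A C) :
  f ⊚ g = h -> forall X (x : HomC X A), f ⊚ (g ⊚ x) = h ⊚ x.
Proof. by move=> e X x; rewrite comp_assoc e. Qed.

Lemma comp_extend3 A B C D (f : HomC C D) (g : HomC B C) (h : HomC A B) (e : HomC A D) :
  f ⊚ (g ⊚ h) = e -> forall X (x : HomC X A), f ⊚ (g ⊚ (h ⊚ x)) = e ⊚ x.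
Proof. by move=> E X x; rewrite -E !comp_rassoc. Qed.

End Preadditive.

(* Equations [f ⊚ g = h] marked as [comp_rule] are used by [comp_solve] as
   left-to-right rewrite rules on right-associated composites. *)
Definition comp_rule (P : Prop) := P.
Lemma comp_ruleE P : comp_rule P -> P. Proof. by []. Qed.

Ltac comp_normalize :=
  repeat progress rewrite ?comp_rassoc ?compDl ?compDr ?comp1l ?comp1r ?comp0l ?comp0r
                          ?compNl ?compNr ?addr0 ?add0r ?oppr0 ?opprK.

Ltac comp_use_rules :=
  repeat (comp_normalize;
    match goal with H : comp_rule (_ ⊚ _ = _) |- _ =>
      progress (rewrite ?(comp_ruleE H); try rewrite ?(comp_extend2 (comp_ruleE H));
                try rewrite ?(comp_extend3 (comp_ruleE H)))
    end); comp_normalize.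

(* Match the summands of both sides of an equation up to commutativity. *)
Ltac sum_ac :=
  rewrite ?addrA;
  repeat match goal with
  | |- ?L + ?t = ?R => try rewrite [in RHS](addrC t); repeat rewrite [RHS](addrAC _ t);
                       apply: (congr1 (fun z => z + t))
  end; try reflexivity.

Ltac comp_solve := comp_use_rules; try reflexivity; try sum_ac.

Ltac mark_rule H := let t := type of H in change (comp_rule t) in H.
Ltac as_rule H := let t := type of H in let n := fresh "R" in have n : comp_rule t := H.

Ltac biproduct_rules H :=
  let a := fresh "bp" in let b := fresh "bp" in let c := fresh "bp" in
  let d := fresh "bp" in let e := fresh "bp_sum" in
  case: (H) => a b c d e; mark_rule a; mark_rule b; mark_rule c; mark_rule d.

Section Universal.
Variable K : PreAdditive.
Implicit Types A B C X : K.

Lemma kernel_monic A B C (i : HomC A B) (d : HomC B C) X (x y : HomC X A) :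
  is_kernel i d -> i ⊚ x = i ⊚ y -> x = y.
Proof.
case=> di H e. have [g [_ U]] := H X (i ⊚ x) ltac:(by rewrite -comp_rassoc di comp0l).
by rewrite -(U x) // (U y).
Qed.

Lemma cokernel_epic A B C (i : HomC A B) (d : HomC B C) X (x y : HomC C X) :
  is_cokernel d i -> x ⊚ d = y ⊚ d -> x = y.
Proof.
case=> di H e. have [g [_ U]] := H X (x ⊚ d) ltac:(by rewrite comp_rassoc di comp0r).
by rewrite -(U x) // (U y).
Qed.

Lemma pushout_unique A B A' P (i : HomC A B) (f : HomC A A') (i' : HomC A' P)
    (f' : HomC B P) X (w w' : HomC P X) :
  is_pushout i f i' f' -> w ⊚ f' = w' ⊚ f' -> w ⊚ i' = w' ⊚ i' -> w = w'.
Proof.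
case=> sq H e1 e2.
have [g [_ U]] := H X (w ⊚ f') (w ⊚ i') ltac:(by rewrite !comp_rassoc sq).
by rewrite -(U w) // (U w').
Qed.

Lemma pushout_factor A B A' P (i : HomC A B) (f : HomC A A') (i' : HomC A' P)
    (f' : HomC B P) X (u : HomC B X) (v : HomC A' X) :
  is_pushout i f i' f' -> u ⊚ i = v ⊚ f ->
  exists w : HomC P X, w ⊚ f' = u /\ w ⊚ i' = v.
Proof. case=> sq H e. by have [g [Hg _]] := H X u v e; exists g. Qed.

Lemma pullback_unique B C C' Q (d : HomC B C) (g : HomC C' C) (d' : HomC Q C')
    (g' : HomC Q B) X (w w' : HomC X Q) :
  is_pullback d g d' g' -> g' ⊚ w = g' ⊚ w' -> d' ⊚ w = d' ⊚ w' -> w = w'.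
Proof.
case=> sq H e1 e2.
have [h [_ U]] := H X (g' ⊚ w) (d' ⊚ w) ltac:(by rewrite -!comp_rassoc sq).
by rewrite -(U w) // (U w').
Qed.

Lemma pullback_factor B C C' Q (d : HomC B C) (g : HomC C' C) (d' : HomC Q C')
    (g' : HomC Q B) X (u : HomC X B) (v : HomC X C') :
  is_pullback d g d' g' -> d ⊚ u = g ⊚ v ->
  exists w : HomC X Q, g' ⊚ w = u /\ d' ⊚ w = v.
Proof. case=> sq H e. by have [h [Hh _]] := H X u v e; exists h. Qed.

Lemma pushout_cokernel A B C A' P (i : HomC A B) (d : HomC B C) (f : HomC A A')
    (j : HomC A' P) (f' : HomC B P) (e : HomC P C) :
  kc_pair i d -> is_pushout i f j f' -> e ⊚ f' = d -> e ⊚ j = 0 -> is_cokernel e j.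
Proof.
move=> [_ [di H]] po ef ej; split => // X h hj.
have [sq _] := po.
have [g [gd U]] := H X (h ⊚ f') ltac:(by rewrite comp_rassoc sq -comp_rassoc hj comp0l).
exists g; split.
- by apply: (pushout_unique po); rewrite comp_rassoc ?ef ?gd // ej comp0r hj.
- by move=> g' eg; apply: U; rewrite -ef -comp_rassoc eg.
Qed.

Lemma pullback_kernel A B C C' Q (i : HomC A B) (d : HomC B C) (g : HomC C' C)
    (d' : HomC Q C') (g' : HomC Q B) (i' : HomC A Q) :
  kc_pair i d -> is_pullback d g d' g' -> g' ⊚ i' = i -> d' ⊚ i' = 0 ->
  is_kernel i' d'.
Proof.
move=> [[di H] _] pb gi di'; split => // X x dx.
have [sq _] := pb.
have [y [iy U]] := H X (g' ⊚ x) ltac:(by rewrite -comp_rassoc sq comp_rassoc dx comp0r).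
exists y; split.
- by apply: (pullback_unique pb); rewrite -comp_rassoc ?gi ?iy // di' comp0l dx.
- by move=> y' ey; apply: U; rewrite -gi comp_rassoc ey.
Qed.

Lemma iso_id A : is_iso (idm A). Proof. by exists (idm A); rewrite comp1l. Qed.

Lemma iso_comp A B C (f : HomC A B) (g : HomC B C) :
  is_iso f -> is_iso g -> is_iso (g ⊚ f).
Proof.
case=> f' [f1 f2] [g' [g1 g2]]; exists (f' ⊚ g'); split.
- by rewrite comp_rassoc -(comp_rassoc g') g1 comp1l.
- by rewrite comp_rassoc -(comp_rassoc f) f2 comp1l.
Qed.

Lemma iso_inv A B (f : HomC A B) :
  is_iso f -> exists g : HomC B A, [/\ is_iso g, g ⊚ f = idm A & f ⊚ g = idm B].
Proof. by case=> g [g1 g2]; exists g; split => //; exists f. Qed.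

Lemma iso_seq_sym A B C A' B' C' (i : HomC A B) (d : HomC B C) (i' : HomC A' B')
    (d' : HomC B' C') :
  iso_seq i d i' d' -> iso_seq i' d' i d.
Proof.
case=> a [b [c [ia ib ic e1 e2]]].
have [a' [ia' a1 a2]] := iso_inv ia. have [b' [ib' b1 b2]] := iso_inv ib.
have [c' [ic' c1 c2]] := iso_inv ic.
exists a', b', c'; split => //.
- have -> : i ⊚ a' = b' ⊚ (b ⊚ i) ⊚ a' by rewrite -comp_rassoc b1 comp1l.
  by rewrite e1 !comp_rassoc a2 comp1r.
- have -> : d ⊚ b' = c' ⊚ (c ⊚ d) ⊚ b' by rewrite -comp_rassoc c1 comp1l.
  by rewrite e2 !comp_rassoc b2 comp1r.
Qed.

Lemma iso_seq_trans A B C A' B' C' A'' B'' C'' (i : HomC A B) (d : HomC B C)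
    (i' : HomC A' B') (d' : HomC B' C') (i'' : HomC A'' B'') (d'' : HomC B'' C'') :
  iso_seq i d i' d' -> iso_seq i' d' i'' d'' -> iso_seq i d i'' d''.
Proof.
case=> a [b [c [ia ib ic e1 e2]]]; case=> a' [b' [c' [ia' ib' ic' e1' e2']]].
exists (a' ⊚ a), (b' ⊚ b), (c' ⊚ c); split; try exact: iso_comp.
- by rewrite comp_rassoc e1 -comp_rassoc e1' comp_rassoc.
- by rewrite comp_rassoc e2 -comp_rassoc e2' comp_rassoc.
Qed.

(* The inverse t is obtained from the cokernel property of q1,
   using a section sg of q2 and the factorisation r of 1 - sg ⊚ q2 through the
   copy k : A -> Q of the kernel of q2. *)
Lemma short_five_pullback A A'' B B' C Q (i : HomC A B) (d : HomC B C) (i' : HomC A B')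
    (d' : HomC B' C) (s : HomC B B') (q1 : HomC Q B') (q2 : HomC Q B) (k'' : HomC A'' Q) :
  kc_pair i d -> is_kernel i' d' -> is_pullback d d' q1 q2 -> is_cokernel q1 k'' ->
  s ⊚ i = i' -> d' ⊚ s = d -> is_iso s.
Proof.
move=> [[di Hi] _] ki' pb cq si ds; have di' := ki'.1.
have [sq _] := pb.
(* sg : B -> Q is a section of q2, and k, k' : A -> Q the two copies of A *)
have [sg [sg2 sg1]] := pullback_factor pb (u := idm B) (v := s) ltac:(by rewrite ds comp1r).
have [k [k2 k1]] := pullback_factor pb (u := 0) (v := i') ltac:(by rewrite comp0r di').
have [k' [k'2 k'1]] := pullback_factor pb (u := i) (v := 0) ltac:(by rewrite comp0r di).
have [r kr] : exists r : HomC Q A, k ⊚ r = idm Q - sg ⊚ q2.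
  have h0 : d' ⊚ (q1 ⊚ (idm Q - sg ⊚ q2)) = 0.
    by rewrite -comp_rassoc -sq comp_rassoc compDr compNr comp1r -comp_rassoc sg2 comp1l subrr comp0r.
  have [y [iy _]] := ki'.2 Q _ h0. exists y.
  apply: (pullback_unique pb).
  - by rewrite -comp_rassoc k2 comp0l compDr compNr comp1r -comp_rassoc sg2 comp1l subrr.
  - by rewrite -comp_rassoc k1 iy.
have rsg : r ⊚ sg = 0.
  apply: (kernel_monic ki'); rewrite comp0r -k1 comp_rassoc -(comp_rassoc k) kr.
  by rewrite compDl compNl comp1l comp_rassoc sg2 comp1r subrr comp0r.
have rk' : r ⊚ k' = - idm A.
  apply: (kernel_monic ki'); rewrite compNr comp1r -k1 comp_rassoc -(comp_rassoc k) kr.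
  rewrite compDl compNl comp1l compDr compNr k'1 comp_rassoc k'2 -comp_rassoc sg1 si k1.
  by rewrite sub0r.
have [q1k'' Hq] := cq.
have [phi kphi] : exists phi : HomC A'' A, k' ⊚ phi = k''.
  have h0 : d ⊚ (q2 ⊚ k'') = 0 by rewrite -comp_rassoc sq comp_rassoc q1k'' comp0r.
  have [y [iy _]] := Hi A'' _ h0. exists y.
  apply: (pullback_unique pb).
  - by rewrite -comp_rassoc k'2 iy.
  - by rewrite -comp_rassoc k'1 comp0l q1k''.
have [t [tq _]] := Hq B (q2 + i ⊚ r)
  ltac:(by rewrite -kphi -comp_rassoc compDl comp_rassoc rk' compNr comp1r k'2 subrr comp0l).
exists t; split.
- by rewrite -sg1 -comp_rassoc tq compDl sg2 comp_rassoc rsg comp0r addr0.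
- apply: (cokernel_epic cq); rewrite comp_rassoc tq comp1l compDr -comp_rassoc si.
  rewrite -[q1 in RHS]comp1r -[idm Q](subrK (sg ⊚ q2)) -kr compDr -comp_rassoc k1.
  by rewrite -comp_rassoc sg1 addrC.
Qed.

End Universal.

Section StableClass.
Variable K : PreAdditive.
Variable W : seqclass K.
Hypothesis kcW : kc_class W.
Hypothesis icW : iso_closed W.
Implicit Types A B C X : K.

Lemma cokernel_replace A B C C' (j : HomC A B) (e'' : HomC B C) (e : HomC B C') :
  W j e'' -> is_cokernel e j -> W j e.
Proof.
move=> Wj ce. have [_ ce''] := kcW Wj.
have [c [ce1 _]] := ce''.2 C' e ce.1. have [c' [ce1' _]] := ce.2 C e'' ce''.1.
apply: (icW Wj); exists (idm A), (idm B), c.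
split; rewrite ?comp1r ?comp1l //; try exact: iso_id.
exists c'; split.
- by apply: (cokernel_epic ce''); rewrite comp_rassoc ce1 ce1' comp1l.
- by apply: (cokernel_epic ce); rewrite comp_rassoc ce1' ce1 comp1l.
Qed.

Lemma kernel_replace A A' B C (i'' : HomC A' B) (i : HomC A B) (d : HomC B C) :
  W i'' d -> is_kernel i d -> W i d.
Proof.
move=> Wi ki. have [ki'' _] := kcW Wi.
have [a [ka _]] := ki.2 A' i'' ki''.1. have [a' [ka' _]] := ki''.2 A i ki.1.
apply: (icW Wi); exists a, (idm B), (idm C).
split; rewrite ?comp1r ?comp1l //; try exact: iso_id.
exists a'; split.
- by apply: (kernel_monic ki''); rewrite -comp_rassoc ka' ka comp1r.
- by apply: (kernel_monic ki); rewrite -comp_rassoc ka ka' comp1r.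
Qed.

Section Pushouts.
Hypothesis e2W : E2 W.

Lemma pushout_seq_mem A B C A' P (i : HomC A B) (d : HomC B C) (f : HomC A A')
    (j : HomC A' P) (e : HomC P C) :
  W i d -> pushout_seq i d f j e -> W j e.
Proof.
move=> Wi [f' [po ef ej]].
have [C'' [e'' We]] := (e2W (ex_intro _ C (ex_intro _ d Wi)) f).2 P j f' po.
apply: (cokernel_replace We); exact: pushout_cokernel (kcW Wi) po ef ej.
Qed.

Lemma pushout_seq_exists A B C A' (i : HomC A B) (d : HomC B C) (f : HomC A A') :
  W i d ->
  exists (P : K) (j : HomC A' P) (e : HomC P C), pushout_seq i d f j e /\ W j e.
Proof.
move=> Wi. have [[P [j [f' po]]] _] := e2W (ex_intro _ C (ex_intro _ d Wi)) f.
have [[di _] _] := kcW Wi.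
have [e [ef ej]] := pushout_factor po (u := d) (v := 0) ltac:(by rewrite di comp0l).
have pos : pushout_seq i d f j e by exists f'.
by exists P, j, e; split => //; exact: pushout_seq_mem Wi pos.
Qed.

End Pushouts.

Section Pullbacks.
Hypothesis e2oW : E2op W.

Lemma pullback_seq_mem A B C C' Q (i : HomC A B) (d : HomC B C) (g : HomC C' C)
    (i' : HomC A Q) (d' : HomC Q C') :
  W i d -> pullback_seq i d g i' d' -> W i' d'.
Proof.
move=> Wi [g' [pb gi di]].
have [A'' [i'' Wd]] := (e2oW (ex_intro _ A (ex_intro _ i Wi)) g).2 Q d' g' pb.
apply: (kernel_replace Wd); exact: pullback_kernel (kcW Wi) pb gi di.
Qed.

Lemma pullback_seq_exists A B C C' (i : HomC A B) (d : HomC B C) (g : HomC C' C) :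
  W i d ->
  exists (Q : K) (i' : HomC A Q) (d' : HomC Q C'), pullback_seq i d g i' d' /\ W i' d'.
Proof.
move=> Wi. have [[Q [d' [g' pb]]] _] := e2oW (ex_intro _ A (ex_intro _ i Wi)) g.
have [[di _] _] := kcW Wi.
have [i' [gi di']] := pullback_factor pb (u := i) (v := 0) ltac:(by rewrite di comp0r).
have pbs : pullback_seq i d g i' d' by exists g'.
by exists Q, i', d'; split => //; exact: pullback_seq_mem Wi pbs.
Qed.

(* Short five lemma: a morphism (1, s, 1) from a member of W to a
   kernel-cokernel pair is an isomorphism; the projection of the pullback of
   d along d' is an admissible epic, hence a cokernel. *)
Lemma short_five A B B' C (i : HomC A B) (d : HomC B C) (i' : HomC A B')
    (d' : HomC B' C) (s : HomC B B') :
  W i d -> kc_pair i' d' -> s ⊚ i = i' -> d' ⊚ s = d -> is_iso s.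
Proof.
move=> Wi [ki' _] si ds.
have [[Q [q1 [q2 pb]]] Hadm] := e2oW (ex_intro _ A (ex_intro _ i Wi)) d'.
have [A'' [k'' Wq]] := Hadm Q q1 q2 pb.
exact: (short_five_pullback (kcW Wi) ki' pb (kcW Wq).2 si ds).
Qed.

Lemma short_five_iso A B C A' B' C' (i : HomC A B) (d : HomC B C) (i' : HomC A' B')
    (d' : HomC B' C') (a : HomC A A') (s : HomC B B') (c : HomC C C') :
  W i d -> kc_pair i' d' -> is_iso a -> is_iso c ->
  s ⊚ i = i' ⊚ a -> d' ⊚ s = c ⊚ d -> is_iso s.
Proof.
move=> Wi kc' ia icc si ds.
have [a' [_ a1 a2]] := iso_inv ia.
have W2 : W (i ⊚ a') (c ⊚ d).
  apply: (icW Wi); exists a, (idm B), c; split => //; try exact: iso_id.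
  - by rewrite comp1l comp_rassoc a1 comp1r.
  - by rewrite comp1r.
by apply: (short_five W2 kc' _ ds); rewrite -comp_rassoc si comp_rassoc a2 comp1r.
Qed.

End Pullbacks.
End StableClass.

Section Biproducts.
Variable K : PreAdditive.
Implicit Types A B C X Y : K.

Lemma biproduct_sum X Y S (i1 : HomC X S) (i2 : HomC Y S) p1 p2 :
  is_biproduct i1 i2 p1 p2 -> i1 ⊚ p1 + i2 ⊚ p2 = idm S.
Proof. by case. Qed.

Lemma biproduct_out_ext X Y S Z (i1 : HomC X S) (i2 : HomC Y S) p1 p2 (x y : HomC S Z) :
  is_biproduct i1 i2 p1 p2 -> x ⊚ i1 = y ⊚ i1 -> x ⊚ i2 = y ⊚ i2 -> x = y.
Proof.
by case=> _ _ _ _ e h1 h2; rewrite -[x]comp1r -[y]comp1r -e !compDr -!comp_rassoc h1 h2.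
Qed.

Lemma biproduct_swap X Y S (i1 : HomC X S) (i2 : HomC Y S) p1 p2 :
  is_biproduct i1 i2 p1 p2 -> is_biproduct i2 i1 p2 p1.
Proof. by case=> *; split => //; rewrite addrC. Qed.

Lemma biproduct_zero X Y (z : HomC Y X) (z' : HomC X Y) :
  idm Y = 0 -> is_biproduct (idm X) z (idm X) z'.
Proof.
move=> Y0.
have -> : z = 0 by rewrite -[z]comp1r Y0 comp0r.
have -> : z' = 0 by rewrite -[z']comp1l Y0 comp0l.
by split; rewrite ?comp1l ?comp0l ?comp0r ?addr0.
Qed.

Lemma dsum0 X Y S X' Y' T (i1 : HomC X S) (i2 : HomC Y S) p1 p2
    (j1 : HomC X' T) (j2 : HomC Y' T) q1 q2 :
  dsum i1 i2 p1 p2 j1 j2 q1 q2 (0 : HomC X X') (0 : HomC Y Y') = 0.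
Proof. by rewrite /dsum !comp0l !comp0r addr0. Qed.

Lemma dsum_comp X Y S X' Y' T X'' Y'' U
  (i1 : HomC X S) (i2 : HomC Y S) (p1 : HomC S X) (p2 : HomC S Y)
  (j1 : HomC X' T) (j2 : HomC Y' T) (q1 : HomC T X') (q2 : HomC T Y')
  (k1 : HomC X'' U) (k2 : HomC Y'' U) (r1 : HomC U X'') (r2 : HomC U Y'')
  (f : HomC X X') (g : HomC Y Y') (f' : HomC X' X'') (g' : HomC Y' Y'') :
  is_biproduct j1 j2 q1 q2 ->
  dsum j1 j2 q1 q2 k1 k2 r1 r2 f' g' ⊚ dsum i1 i2 p1 p2 j1 j2 q1 q2 f g =
  dsum i1 i2 p1 p2 k1 k2 r1 r2 (f' ⊚ f) (g' ⊚ g).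
Proof. by move=> Hj; biproduct_rules Hj; rewrite /dsum; comp_solve. Qed.

Lemma dsum_iso X Y S X' Y' T
  (i1 : HomC X S) (i2 : HomC Y S) (p1 : HomC S X) (p2 : HomC S Y)
  (j1 : HomC X' T) (j2 : HomC Y' T) (q1 : HomC T X') (q2 : HomC T Y')
  (f : HomC X X') (g : HomC Y Y') :
  is_biproduct i1 i2 p1 p2 -> is_biproduct j1 j2 q1 q2 -> is_iso f -> is_iso g ->
  is_iso (dsum i1 i2 p1 p2 j1 j2 q1 q2 f g).
Proof.
move=> Hi Hj [f' [f1 f2]] [g' [g1 g2]].
exists (dsum j1 j2 q1 q2 i1 i2 p1 p2 f' g'); split.
- by rewrite dsum_comp // f1 g1 /dsum !comp1l biproduct_sum.
- by rewrite dsum_comp // f2 g2 /dsum !comp1l biproduct_sum.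
Qed.

(* Interchange: (P (+) Q) (+) (P' (+) Q') is a biproduct of X1 = P (+) P'
   and X2 = Q (+) Q'. *)
Lemma biproduct_interchange P Q P' Q' X1 X2 S S' U
  (x1 : HomC P X1) (x2 : HomC P' X1) (x1' : HomC X1 P) (x2' : HomC X1 P')
  (z1 : HomC Q X2) (z2 : HomC Q' X2) (z1' : HomC X2 Q) (z2' : HomC X2 Q')
  (s1 : HomC P S) (s2 : HomC Q S) (s1' : HomC S P) (s2' : HomC S Q)
  (t1 : HomC P' S') (t2 : HomC Q' S') (t1' : HomC S' P') (t2' : HomC S' Q')
  (u1 : HomC S U) (u2 : HomC S' U) (u1' : HomC U S) (u2' : HomC U S') :
  is_biproduct x1 x2 x1' x2' -> is_biproduct z1 z2 z1' z2' ->
  is_biproduct s1 s2 s1' s2' -> is_biproduct t1 t2 t1' t2' ->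
  is_biproduct u1 u2 u1' u2' ->
  is_biproduct (u1 ⊚ s1 ⊚ x1' + u2 ⊚ t1 ⊚ x2') (u1 ⊚ s2 ⊚ z1' + u2 ⊚ t2 ⊚ z2')
               (x1 ⊚ s1' ⊚ u1' + x2 ⊚ t1' ⊚ u2') (z1 ⊚ s2' ⊚ u1' + z2 ⊚ t2' ⊚ u2').
Proof.
move=> Hx Hz Hs Ht Hu.
have Ss := biproduct_sum Hs. have St := biproduct_sum Ht. have Su := biproduct_sum Hu.
biproduct_rules Hx; biproduct_rules Hz; biproduct_rules Hs; biproduct_rules Ht;
  biproduct_rules Hu.
split; try by comp_use_rules.
by rewrite -Su -[u1' in RHS]comp1l -Ss -[u2' in RHS]comp1l -St; comp_solve.
Qed.

(* Naturality of the interchange: (f (+) g) (+) (f' (+) g') corresponds to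
   (f (+) f') (+) (g (+) g') under the interchange biproducts. *)
Lemma dsum_interchange P Q P' Q' X1 X2 S S' U P2 Q2 P2' Q2' Y1 Y2 T T' V
  (x1 : HomC P X1) (x2 : HomC P' X1) (x1' : HomC X1 P) (x2' : HomC X1 P')
  (z1 : HomC Q X2) (z2 : HomC Q' X2) (z1' : HomC X2 Q) (z2' : HomC X2 Q')
  (s1 : HomC P S) (s2 : HomC Q S) (s1' : HomC S P) (s2' : HomC S Q)
  (t1 : HomC P' S') (t2 : HomC Q' S') (t1' : HomC S' P') (t2' : HomC S' Q')
  (u1 : HomC S U) (u2 : HomC S' U) (u1' : HomC U S) (u2' : HomC U S')
  (y1 : HomC P2 Y1) (y2 : HomC P2' Y1) (y1' : HomC Y1 P2) (y2' : HomC Y1 P2')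
  (w1 : HomC Q2 Y2) (w2 : HomC Q2' Y2) (w1' : HomC Y2 Q2) (w2' : HomC Y2 Q2')
  (m1 : HomC P2 T) (m2 : HomC Q2 T) (m1' : HomC T P2) (m2' : HomC T Q2)
  (n1 : HomC P2' T') (n2 : HomC Q2' T') (n1' : HomC T' P2') (n2' : HomC T' Q2')
  (v1 : HomC T V) (v2 : HomC T' V) (v1' : HomC V T) (v2' : HomC V T')
  (f : HomC P P2) (g : HomC Q Q2) (f' : HomC P' P2') (g' : HomC Q' Q2') :
  is_biproduct x1 x2 x1' x2' -> is_biproduct z1 z2 z1' z2' ->
  is_biproduct y1 y2 y1' y2' -> is_biproduct w1 w2 w1' w2' ->
  dsum u1 u2 u1' u2' v1 v2 v1' v2' (dsum s1 s2 s1' s2' m1 m2 m1' m2' f g)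
                                   (dsum t1 t2 t1' t2' n1 n2 n1' n2' f' g') =
  dsum (u1 ⊚ s1 ⊚ x1' + u2 ⊚ t1 ⊚ x2') (u1 ⊚ s2 ⊚ z1' + u2 ⊚ t2 ⊚ z2')
       (x1 ⊚ s1' ⊚ u1' + x2 ⊚ t1' ⊚ u2') (z1 ⊚ s2' ⊚ u1' + z2 ⊚ t2' ⊚ u2')
       (v1 ⊚ m1 ⊚ y1' + v2 ⊚ n1 ⊚ y2') (v1 ⊚ m2 ⊚ w1' + v2 ⊚ n2 ⊚ w2')
       (y1 ⊚ m1' ⊚ v1' + y2 ⊚ n1' ⊚ v2') (w1 ⊚ m2' ⊚ v1' + w2 ⊚ n2' ⊚ v2')
       (dsum x1 x2 x1' x2' y1 y2 y1' y2' f f') (dsum z1 z2 z1' z2' w1 w2 w1' w2' g g').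
Proof.
move=> Hx Hz Hy Hw; rewrite /dsum.
by biproduct_rules Hx; biproduct_rules Hz; biproduct_rules Hy; biproduct_rules Hw;
  comp_solve.
Qed.

(* The codiagonal of an interchange biproduct (X (+) X) is the direct sum of
   the codiagonals. *)
Lemma codiagonal_interchange P P' X S S' U (x1 : HomC P X) (x2 : HomC P' X)
    (x1' : HomC X P) (x2' : HomC X P') (s1' s2' : HomC S P) (t1' t2' : HomC S' P')
    (u1 : HomC S U) (u2 : HomC S' U) (u1' : HomC U S) (u2' : HomC U S') :
  (x1 ⊚ s1' ⊚ u1' + x2 ⊚ t1' ⊚ u2') + (x1 ⊚ s2' ⊚ u1' + x2 ⊚ t2' ⊚ u2') =
  dsum u1 u2 u1' u2' x1 x2 x1' x2' (s1' + s2') (t1' + t2').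
Proof. by rewrite /dsum; comp_solve. Qed.

(* Dually for the diagonal. *)
Lemma diagonal_interchange P P' X S S' U (x1 : HomC P X) (x2 : HomC P' X)
    (x1' : HomC X P) (x2' : HomC X P') (s1 s2 : HomC P S) (t1 t2 : HomC P' S')
    (u1 : HomC S U) (u2 : HomC S' U) (u1' : HomC U S) (u2' : HomC U S') :
  (u1 ⊚ s1 ⊚ x1' + u2 ⊚ t1 ⊚ x2') + (u1 ⊚ s2 ⊚ x1' + u2 ⊚ t2 ⊚ x2') =
  dsum x1 x2 x1' x2' u1 u2 u1' u2' (s1 + s2) (t1 + t2).
Proof. by rewrite /dsum; comp_solve. Qed.

Lemma pushout_dsum_id A B Y SA SB (i : HomC A B)
    (a1 : HomC A SA) (a2 : HomC Y SA) (a1' : HomC SA A) (a2' : HomC SA Y)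
    (b1 : HomC B SB) (b2 : HomC Y SB) (b1' : HomC SB B) (b2' : HomC SB Y) :
  is_biproduct a1 a2 a1' a2' -> is_biproduct b1 b2 b1' b2' ->
  is_pushout i a1 (dsum a1 a2 a1' a2' b1 b2 b1' b2' i (idm Y)) b1.
Proof.
move=> Ha Hb; have Sa := biproduct_sum Ha.
biproduct_rules Ha; biproduct_rules Hb; rewrite /dsum.
split; first by comp_solve.
move=> X u v uv; exists (u ⊚ b1' + v ⊚ a2 ⊚ b2'); split.
- split; first by comp_solve.
  comp_use_rules; by rewrite -!comp_rassoc uv !comp_rassoc -compDr Sa comp1r.
- move=> w [w1 w2]; symmetry; apply: (biproduct_out_ext Hb).
  + by rewrite w1; comp_solve.
  + have e : b2 = (b1 ⊚ (i ⊚ a1') + b2 ⊚ (idm Y ⊚ a2')) ⊚ a2 by comp_solve.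
    by rewrite [in LHS]e -comp_rassoc w2; comp_solve.
Qed.

Lemma dsum_cokernel A B C A' B' C' (i : HomC A B) (d : HomC B C) (i' : HomC A' B')
    (d' : HomC B' C') SA SB SC (a1 : HomC A SA) (a2 : HomC A' SA) a1' a2'
    (b1 : HomC B SB) (b2 : HomC B' SB) b1' b2' (c1 : HomC C SC) (c2 : HomC C' SC) c1' c2' :
  is_cokernel d i -> is_cokernel d' i' -> is_biproduct a1 a2 a1' a2' ->
  is_biproduct b1 b2 b1' b2' -> is_biproduct c1 c2 c1' c2' ->
  is_cokernel (dsum b1 b2 b1' b2' c1 c2 c1' c2' d d') (dsum a1 a2 a1' a2' b1 b2 b1' b2' i i').
Proof.
move=> [di Hd] [di' Hd'] Ha Hb Hc.
have Sb := biproduct_sum Hb. have Sc := biproduct_sum Hc.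
split; first by rewrite dsum_comp // di di' dsum0.
move=> X h hi.
biproduct_rules Ha; biproduct_rules Hb; biproduct_rules Hc.
have h1 : (h ⊚ b1) ⊚ i = 0.
  by have := congr1 (fun z => z ⊚ a1) hi; rewrite comp0l /dsum => <-; comp_solve.
have h2 : (h ⊚ b2) ⊚ i' = 0.
  by have := congr1 (fun z => z ⊚ a2) hi; rewrite comp0l /dsum => <-; comp_solve.
have [g1 [g1d U1]] := Hd X _ h1. have [g2 [g2d U2]] := Hd' X _ h2.
exists (g1 ⊚ c1' + g2 ⊚ c2'); split.
- as_rule g1d; as_rule g2d; rewrite /dsum; comp_use_rules.
  by rewrite -compDr Sb comp1r.
- move=> g' eg.
  have e1 : g' ⊚ c1 = g1 by symmetry; apply: U1; rewrite -eg /dsum; comp_solve.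
  have e2 : g' ⊚ c2 = g2 by symmetry; apply: U2; rewrite -eg /dsum; comp_solve.
  by rewrite -e1 -e2 !comp_rassoc -compDr Sc comp1r.
Qed.

(* Exact structures are closed under direct sums: i (+) i' is the composite
   (1 (+) i') ⊚ (i (+) 1) of two pushouts of admissible monics. *)
Lemma exact_dsum_closed (E : seqclass K) :
  is_additive K -> exact_structure E -> dsum_closed E.
Proof.
move=> [_ Kb] [kc ic _ [e2 _] [cm _]].
move=> A B C A' B' C' i d i' d' Ei Ei' SA SB SC a1 a2 a1' a2' b1 b2 b1' b2'
  c1 c2 c1' c2' Ha Hb Hc.
have [T [t1 [t2 [t1' [t2' Ht]]]]] := Kb B A'.
have po1 := pushout_dsum_id i Ha Ht.
have po2 : is_pushout i' t2 (dsum t1 t2 t1' t2' b1 b2 b1' b2' (idm B) i') b2.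
  have -> : dsum t1 t2 t1' t2' b1 b2 b1' b2' (idm B) i' =
            dsum t2 t1 t2' t1' b2 b1 b2' b1' i' (idm B) by rewrite /dsum addrC.
  exact: (pushout_dsum_id i' (biproduct_swap Ht) (biproduct_swap Hb)).
have m1 := (e2 _ _ _ (ex_intro _ C (ex_intro _ d Ei)) _ a1).2 _ _ _ po1.
have m2 := (e2 _ _ _ (ex_intro _ C' (ex_intro _ d' Ei')) _ t2).2 _ _ _ po2.
have [C'' [e Ee]] := cm _ _ _ _ _ m1 m2.
rewrite dsum_comp // comp1l comp1r in Ee.
apply: (cokernel_replace kc ic Ee).
by apply: dsum_cokernel => //; [exact: (kc _ _ _ _ _ Ei).2 | exact: (kc _ _ _ _ _ Ei').2].
Qed.

End Biproducts.

Lemma zero_of_cokernel_id (K : PreAdditive) (A X : K) (dA : HomC A X) :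
  is_cokernel dA (idm A) -> dA = 0 /\ idm X = 0.
Proof.
move=> [e H]; rewrite comp1r in e; split => //.
have [g [_ U]] := H X 0 ltac:(by rewrite comp0l).
by rewrite -(U (idm X)) ?comp1l // (U 0) ?comp0l.
Qed.

Lemma zero_of_kernel_id (K : PreAdditive) (Y C : K) (iC : HomC Y C) :
  is_kernel iC (idm C) -> iC = 0 /\ idm Y = 0.
Proof.
move=> [e H]; rewrite comp1l in e; split => //.
have [g [_ U]] := H Y 0 ltac:(by rewrite comp0r).
by rewrite -(U (idm Y)) ?comp1r // (U 0) ?comp0r.
Qed.

(* A weakly exact structure contains the split sequences A -> A (+) C -> C:
   they are direct sums of (1_A, A -> 0) and (0 -> C, 1_C). *)
Lemma split_seq_mem (K : PreAdditive) (V : seqclass K) :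
  weakly_exact V -> forall (A C SB : K) (b1 : HomC A SB) (b2 : HomC C SB)
    (b1' : HomC SB A) (b2' : HomC SB C),
  is_biproduct b1 b2 b1' b2' -> V A SB C b1 b2'.
Proof.
move=> [kcV _ dsV [e0 e0o] _] A C SB b1 b2 b1' b2' Hb.
have [X [dA WdA]] := e0 A. have [Y [iC WiC]] := e0o C.
have [dA0 X0] := zero_of_cokernel_id (kcV _ _ _ _ _ WdA).2.
have [iC0 Y0] := zero_of_kernel_id (kcV _ _ _ _ _ WiC).1.
move: (dsV _ _ _ _ _ _ _ _ _ _ WdA WiC _ _ _ _ _ _ _ _ _ _ _ _ _ _ _
  (biproduct_zero (0 : HomC Y A) (0 : HomC A Y) Y0) Hb
  (biproduct_swap (biproduct_zero (0 : HomC X C) (0 : HomC C X) X0))).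
by rewrite /dsum iC0 dA0; comp_normalize.
Qed.

Lemma exact_weakly_exact (K : PreAdditive) (E : seqclass K) :
  is_additive K -> exact_structure E -> weakly_exact E.
Proof.
move=> Kadd exE; have [kc ic e0 e2 _] := exE.
by split => //; exact: exact_dsum_closed.
Qed.

Lemma hom_into_pushout_pullback (K : PreAdditive) (A SA SB SC P Q R C : K)
    (Di : HomC SA SB) (Dd : HomC SB SC) (nabla : HomC SA A) (delta : HomC C SC)
    (j : HomC A P) (e : HomC P SC) (iQ : HomC A Q) (dQ : HomC Q C)
    (k : HomC SA R) (q : HomC R C) (r : HomC R SB) :
  pushout_seq Di Dd nabla j e -> pullback_seq j e delta iQ dQ ->
  q ⊚ k = 0 -> r ⊚ k = Di -> Dd ⊚ r = delta ⊚ q ->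
  exists t : HomC R Q, t ⊚ k = iQ ⊚ nabla /\ dQ ⊚ t = q.
Proof.
move=> [f' [po ef ej]] [g' [pb gi di]] qk rk Ddr.
have [sq _] := po.
have [t [gt dt]] := pullback_factor pb (u := f' ⊚ r) (v := q)
  ltac:(by rewrite -comp_rassoc ef Ddr).
exists t; split => //.
apply: (pullback_unique pb).
- by rewrite -comp_rassoc gt comp_rassoc rk sq -comp_rassoc gi.
- by rewrite -comp_rassoc dt qk -comp_rassoc di comp0l.
Qed.

Lemma pullback_seq_hom (K : PreAdditive) (A B C C'' S R Q1 Q2 : K)
    (i : HomC A B) (d : HomC B C) (k : HomC S R) (q : HomC R C) (h : HomC C'' C)
    (i1 : HomC A Q1) (d1 : HomC Q1 C'') (k1 : HomC S Q2) (q1 : HomC Q2 C'')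
    (p : HomC S A) (u : HomC R B) :
  pullback_seq i d h i1 d1 -> pullback_seq k q h k1 q1 ->
  u ⊚ k = i ⊚ p -> d ⊚ u = q ->
  exists m : HomC Q2 Q1, m ⊚ k1 = i1 ⊚ p /\ d1 ⊚ m = q1.
Proof.
move=> [g1 [pb1 gi1 di1]] [gR [pbR gk qk]] uk du.
have [sqR _] := pbR.
have [m [gm dm]] := pullback_factor pb1 (u := u ⊚ gR) (v := q1)
  ltac:(by rewrite -comp_rassoc du sqR).
exists m; split => //.
apply: (pullback_unique pb1).
- by rewrite -!comp_rassoc gm comp_rassoc gk uk gi1.
- by rewrite -!comp_rassoc dm qk di1 comp0l.
Qed.

Section Comparison.
Variable K : PreAdditive.
Variable W : seqclass K.
Hypothesis kcW : kc_class W.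
Hypothesis icW : iso_closed W.
Hypothesis e2W : E2 W.
Hypothesis e2oW : E2op W.

Lemma pushout_comparison S R C A0 A1 X C1 P (k : HomC S R) (q : HomC R C)
    (f : HomC S A0) (jz : HomC A0 P) (ez : HomC P C) (x : HomC A1 X) (y : HomC X C1)
    (a : HomC A0 A1) (rho : HomC R X) (c : HomC C C1) :
  W k q -> pushout_seq k q f jz ez -> kc_pair x y -> is_iso a -> is_iso c ->
  rho ⊚ k = x ⊚ a ⊚ f -> y ⊚ rho = c ⊚ q -> iso_seq jz ez x y.
Proof.
move=> Wk pos kcxy ia ic rk yr.
have Wz := pushout_seq_mem kcW icW e2W Wk pos.
have [fz [poz ezf ezj]] := pos.
have [v [vf vj]] := pushout_factor poz rk.
have vez : y ⊚ v = c ⊚ ez.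
  apply: (pushout_unique poz).
  - by rewrite !comp_rassoc vf ezf yr.
  - have [[yx _] _] := kcxy.
    by rewrite !comp_rassoc vj ezj comp0r -comp_rassoc yx comp0l.
exists a, v, c; split => //.
exact: (short_five_iso kcW icW e2oW Wz kcxy ia ic vj vez).
Qed.

Lemma iso_seq_of_common_source S R C A0 A1 X1 C1 A2 X2 C2 (k : HomC S R)
    (q : HomC R C) (f : HomC S A0)
    (x1 : HomC A1 X1) (y1 : HomC X1 C1) (a1 : HomC A0 A1) (rho1 : HomC R X1) (c1 : HomC C C1)
    (x2 : HomC A2 X2) (y2 : HomC X2 C2) (a2 : HomC A0 A2) (rho2 : HomC R X2) (c2 : HomC C C2) :
  W k q -> kc_pair x1 y1 -> kc_pair x2 y2 ->
  is_iso a1 -> is_iso c1 -> is_iso a2 -> is_iso c2 ->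
  rho1 ⊚ k = x1 ⊚ a1 ⊚ f -> y1 ⊚ rho1 = c1 ⊚ q ->
  rho2 ⊚ k = x2 ⊚ a2 ⊚ f -> y2 ⊚ rho2 = c2 ⊚ q -> iso_seq x1 y1 x2 y2.
Proof.
move=> Wk kc1 kc2 ia1 ic1 ia2 ic2 rk1 yr1 rk2 yr2.
have [P [jz [ez [pos _]]]] := pushout_seq_exists kcW icW e2W f Wk.
apply: (iso_seq_trans (i' := jz) (d' := ez)); first apply: iso_seq_sym.
- exact: pushout_comparison Wk pos kc1 ia1 ic1 rk1 yr1.
- exact: pushout_comparison Wk pos kc2 ia2 ic2 rk2 yr2.
Qed.

End Comparison.

(* A Baer sum presentation of (i', d') : A' -> B' -> C' over W1 and W2:
   eta1 = (i1, d1) in W1 and eta2 = (i2, d2) in W2, both from C to A;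
   biproducts SA = A (+) A, SB = B1 (+) B2 and SC = C (+) C; a sequence
   xi = (k, q) : SA -> R -> C of Emax together with a morphism (1, r, Delta_C)
   from xi to eta1 (+) eta2 and a morphism (al ⊚ nabla_A, rho, ga) from xi to
   (i', d'), where al and ga are isomorphisms.  By the universal properties,
   xi is then isomorphic to (eta1 (+) eta2) Delta_C and (i', d') to the Baer
   sum nabla_A (eta1 (+) eta2) Delta_C; but presentations, unlike Baer sums,
   only involve equations, which makes them easy to transport. *)
Definition baer_presentation (K : PreAdditive) (Emax W1 W2 : seqclass K)
    (A' B' C' : K) (i' : HomC A' B') (d' : HomC B' C') : Prop :=
  exists (A C SA SB SC R B1 B2 : K) (i1 : HomC A B1) (d1 : HomC B1 C)
    (i2 : HomC A B2) (d2 : HomC B2 C)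
    (a1 a2 : HomC A SA) (a1' a2' : HomC SA A) (b1 : HomC B1 SB) (b2 : HomC B2 SB)
    (b1' : HomC SB B1) (b2' : HomC SB B2) (c1 c2 : HomC C SC) (c1' c2' : HomC SC C)
    (k : HomC SA R) (q : HomC R C) (r : HomC R SB) (rho : HomC R B')
    (al : HomC A A') (ga : HomC C C'),
  [/\ W1 A B1 C i1 d1 /\ W2 A B2 C i2 d2,
      [/\ is_biproduct a1 a2 a1' a2', is_biproduct b1 b2 b1' b2'
        & is_biproduct c1 c2 c1' c2'],
      Emax SA R C k q /\ (is_iso al /\ is_iso ga) &
      [/\ r ⊚ k = dsum a1 a2 a1' a2' b1 b2 b1' b2' i1 i2,
          dsum b1 b2 b1' b2' c1 c2 c1' c2' d1 d2 ⊚ r = (c1 + c2) ⊚ q,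
          rho ⊚ k = i' ⊚ al ⊚ (a1' + a2') &
          d' ⊚ rho = ga ⊚ q]].

Ltac presentation_cases H :=
  move: H => [A [C [SA [SB [SC [R [B1 [B2 [i1 [d1 [i2 [d2 [a1 [a2 [a1' [a2' [b1 [b2
    [b1' [b2' [c1 [c2 [c1' [c2' [k [q [r [rho [al [ga [[Wi1 Wi2] [Ha Hb Hc]
    [Ez [ial iga]] [eq1 eq2 eq3 eq4]]]]]]]]]]]]]]]]]]]]]]]]]]]]]]]].

Lemma dsum_components (K : PreAdditive) (A SA B1 B2 SB R : K) (a1 a2 : HomC A SA)
    (a1' a2' : HomC SA A) (b1 : HomC B1 SB) (b2 : HomC B2 SB) (b1' : HomC SB B1)
    (b2' : HomC SB B2) (i1 : HomC A B1) (i2 : HomC A B2) (r : HomC R SB) (k : HomC SA R) :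
  is_biproduct b1 b2 b1' b2' -> r ⊚ k = dsum a1 a2 a1' a2' b1 b2 b1' b2' i1 i2 ->
  b1' ⊚ r ⊚ k = i1 ⊚ a1' /\ b2' ⊚ r ⊚ k = i2 ⊚ a2'.
Proof.
by move=> Hb e; rewrite !comp_rassoc e /dsum; biproduct_rules Hb; split; comp_solve.
Qed.

Lemma diag_components (K : PreAdditive) (B1 B2 SB C SC R : K) (b1 : HomC B1 SB)
    (b2 : HomC B2 SB) (b1' : HomC SB B1) (b2' : HomC SB B2) (c1 c2 : HomC C SC)
    (c1' c2' : HomC SC C) (d1 : HomC B1 C) (d2 : HomC B2 C) (r : HomC R SB) (q : HomC R C) :
  is_biproduct c1 c2 c1' c2' -> dsum b1 b2 b1' b2' c1 c2 c1' c2' d1 d2 ⊚ r = (c1 + c2) ⊚ q ->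
  d1 ⊚ (b1' ⊚ r) = q /\ d2 ⊚ (b2' ⊚ r) = q.
Proof.
move=> Hc e; biproduct_rules Hc; split.
- have <- : c1' ⊚ (dsum b1 b2 b1' b2' c1 c2 c1' c2' d1 d2 ⊚ r) = d1 ⊚ (b1' ⊚ r).
    by rewrite /dsum; comp_solve.
  by rewrite e; comp_solve.
- have <- : c2' ⊚ (dsum b1 b2 b1' b2' c1 c2 c1' c2' d1 d2 ⊚ r) = d2 ⊚ (b2' ⊚ r).
    by rewrite /dsum; comp_solve.
  by rewrite e; comp_solve.
Qed.

Section Closure.
Variable K : PreAdditive.
Variables Emax Wa Wb : seqclass K.
Hypothesis Kadd : is_additive K.
Hypothesis kcE : kc_class Emax.
Hypothesis icE : iso_closed Emax.
Hypothesis e2E : E2 Emax.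
Hypothesis e2oE : E2op Emax.
Hypothesis dsE : dsum_closed Emax.
Hypothesis wa : weakly_exact Wa.
Hypothesis wb : weakly_exact Wb.
Hypothesis sb : subclass Wb Emax.

Lemma presentation_iso A' B' C' A'' B'' C'' (i' : HomC A' B') (d' : HomC B' C')
    (i'' : HomC A'' B'') (d'' : HomC B'' C'') :
  baer_presentation Emax Wa Wb i' d' -> iso_seq i' d' i'' d'' ->
  baer_presentation Emax Wa Wb i'' d''.
Proof.
move=> H [a' [b' [c' [ia ib ic e1 e2]]]]; presentation_cases H.
exists A, C, SA, SB, SC, R, B1, B2, i1, d1, i2, d2, a1, a2, a1', a2', b1, b2, b1', b2',
  c1, c2, c1', c2', k, q, r, (b' ⊚ rho), (a' ⊚ al), (c' ⊚ ga).
split => //.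
- by split => //; split; exact: iso_comp.
- split => //.
  + by as_rule eq3; as_rule e1; comp_solve.
  + by rewrite -comp_rassoc -e2; as_rule eq4; comp_solve.
Qed.

Lemma presentation_swap A' B' C' (i' : HomC A' B') (d' : HomC B' C') :
  baer_presentation Emax Wa Wb i' d' -> baer_presentation Emax Wb Wa i' d'.
Proof.
move=> H; presentation_cases H.
exists A, C, SA, SB, SC, R, B2, B1, i2, d2, i1, d1, a2, a1, a2', a1', b2, b1, b2', b1',
  c2, c1, c2', c1', k, q, r, rho, al, ga.
split => //.
- by split; exact: biproduct_swap.
- split.
  + by rewrite eq1 /dsum addrC.
  + have -> : dsum b2 b1 b2' b1' c2 c1 c2' c1' d2 d1 = dsum b1 b2 b1' b2' c1 c2 c1' c2' d1 d2.
      by rewrite /dsum addrC.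
    by rewrite eq2 addrC.
  + by rewrite eq3 addrC.
  + exact: eq4.
Qed.

(* eta in Wa is presented as eta + (A -> A (+) C -> C), the split sequence
   being in Wb; here xi = eta (+) (1_A, A -> 0). *)
Lemma presentation_of_member A B C (i : HomC A B) (d : HomC B C) :
  Wa i d -> Emax i d -> baer_presentation Emax Wa Wb i d.
Proof.
move=> Wi Ei; have [_ Kb] := Kadd; have [kcb _ _ [e0b _] _] := wb.
have [X [dA WdA]] := e0b A.
have [dA0 X0] := zero_of_cokernel_id (kcb _ _ _ _ _ WdA).2.
have [SBs [bb1 [bb2 [bb1' [bb2' Hbb]]]]] := Kb A C.
have Wsig := split_seq_mem wb Hbb.
have [SAz [sa1 [sa2 [sa1' [sa2' Hsa]]]]] := Kb A A.
have [RR [rr1 [rr2 [rr1' [rr2' Hrr]]]]] := Kb B A.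
have [SB [sb1 [sb2 [sb1' [sb2' Hsb]]]]] := Kb B SBs.
have [SC [sc1 [sc2 [sc1' [sc2' Hsc]]]]] := Kb C C.
have Ez := dsE Ei (sb WdA) Hsa Hrr (biproduct_zero (0 : HomC X C) (0 : HomC C X) X0).
have [[di _] _] := kcE Ei.
exists A, C, SAz, SB, SC, RR, B, SBs, i, d, bb1, bb2', sa1, sa2, sa1', sa2', sb1, sb2,
  sb1', sb2', sc1, sc2, sc1', sc2'.
exists (dsum sa1 sa2 sa1' sa2' rr1 rr2 rr1' rr2' i (idm A)),
  (dsum rr1 rr2 rr1' rr2' (idm C) (0 : HomC X C) (idm C) (0 : HomC C X) d dA).
exists (sb1 ⊚ rr1' + sb2 ⊚ (bb1 ⊚ rr2' + bb2 ⊚ d ⊚ rr1')), (rr1' + i ⊚ rr2'),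
  (idm A), (idm C).
split; [by split | by split | by split => //; split; exact: iso_id | ].
rewrite /dsum dA0; as_rule di.
biproduct_rules Hsa; biproduct_rules Hrr; biproduct_rules Hsb; biproduct_rules Hsc;
  biproduct_rules Hbb.
by split; comp_solve.
Qed.

(* Pushing out along f: push eta1, eta2 out along g = f ⊚ al, and xi along
   g (+) g. *)
Lemma presentation_pushout A' B' C' A'' P (i' : HomC A' B') (d' : HomC B' C')
    (f : HomC A' A'') (j : HomC A'' P) (e : HomC P C') :
  baer_presentation Emax Wa Wb i' d' -> pushout_seq i' d' f j e ->
  baer_presentation Emax Wa Wb j e.
Proof.
move=> H [f'' [po ef ej]]; presentation_cases H.
have [_ Kb] := Kadd.
have [kca ica _ _ [e2a _]] := wa; have [kcb icb _ _ [e2b _]] := wb.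
pose g := f ⊚ al.
have [P1 [j1 [e1 [[f1 [po1 e1f e1j]] Wj1]]]] := pushout_seq_exists kca ica e2a g Wi1.
have [P2 [j2 [e2 [[f2 [po2 e2f e2j]] Wj2]]]] := pushout_seq_exists kcb icb e2b g Wi2.
have [SA'' [x1 [x2 [x1' [x2' Hx]]]]] := Kb A'' A''.
have [SB'' [y1 [y2 [y1' [y2' Hy]]]]] := Kb P1 P2.
pose G := dsum a1 a2 a1' a2' x1 x2 x1' x2' g g.
have [R'' [k'' [q'' [[fR [poR qf qk]] Ez'']]]] := pushout_seq_exists kcE icE e2E G Ez.
have [sq1 _] := po1; have [sq2 _] := po2; have [sq _] := po.
have [r'' [rf rk]] := pushout_factor poR
  (u := dsum b1 b2 b1' b2' y1 y2 y1' y2' f1 f2 ⊚ r)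
  (v := dsum x1 x2 x1' x2' y1 y2 y1' y2' j1 j2)
  ltac:(by rewrite comp_rassoc eq1 /G !dsum_comp // sq1 sq2).
have [rho'' [rhof rhok]] := pushout_factor poR (u := f'' ⊚ rho) (v := j ⊚ (x1' + x2'))
  ltac:(by rewrite /G /dsum /g; as_rule sq; as_rule eq3; biproduct_rules Ha;
        biproduct_rules Hx; comp_solve).
exists A'', C, SA'', SB'', SC, R'', P1, P2, j1, e1, j2, e2, x1, x2, x1', x2', y1, y2,
  y1', y2', c1, c2, c1', c2'.
exists k'', q'', r'', rho'', (idm A''), ga.
split; [by split | by split | by split => //; split => //; exact: iso_id | ].
split.
- exact: rk.
- apply: (pushout_unique poR).
  + by rewrite comp_rassoc rf -comp_rassoc dsum_comp // e1f e2f eq2 comp_rassoc qf.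
  + by rewrite comp_rassoc rk dsum_comp // e1j e2j dsum0 comp_rassoc qk comp0r.
- by rewrite comp1r.
- apply: (pushout_unique poR).
  + by rewrite comp_rassoc rhof -comp_rassoc ef eq4 comp_rassoc qf.
  + by rewrite comp_rassoc rhok -comp_rassoc ej comp0l comp_rassoc qk comp0r.
Qed.

(* Pulling back along g: pull eta1, eta2 and xi back along h = ga^-1 ⊚ g. *)
Lemma presentation_pullback A' B' C' C'' Q (i' : HomC A' B') (d' : HomC B' C')
    (g : HomC C'' C') (iQ : HomC A' Q) (dQ : HomC Q C'') :
  baer_presentation Emax Wa Wb i' d' -> pullback_seq i' d' g iQ dQ ->
  baer_presentation Emax Wa Wb iQ dQ.
Proof.
move=> H [g' [pb gi di]]; presentation_cases H.
have [_ Kb] := Kadd.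
have [kca ica _ _ [_ e2a]] := wa; have [kcb icb _ _ [_ e2b]] := wb.
have [ga' [_ ga1 ga2]] := iso_inv iga.
pose h := ga' ⊚ g.
have [R1 [i1'' [d1'' [pbs1 Wj1]]]] := pullback_seq_exists kca ica e2a h Wi1.
have [R2 [i2'' [d2'' [pbs2 Wj2]]]] := pullback_seq_exists kcb icb e2b h Wi2.
have [R'' [k'' [q'' [pbsR Ez'']]]] := pullback_seq_exists kcE icE e2oE h Ez.
have [SB'' [y1 [y2 [y1' [y2' Hy]]]]] := Kb R1 R2.
have [SC'' [z1 [z2 [z1' [z2' Hz]]]]] := Kb C'' C''.
have [K1 K2] := dsum_components Hb eq1.
have [D1 D2] := diag_components Hc eq2.
have [m1 [mk1 dm1]] := pullback_seq_hom pbs1 pbsR K1 D1.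
have [m2 [mk2 dm2]] := pullback_seq_hom pbs2 pbsR K2 D2.
have [gR [pbR gk qk]] := pbsR; have [sqR _] := pbR.
have [rho'' [grho drho]] := pullback_factor pb (u := rho ⊚ gR) (v := q'')
  ltac:(by rewrite -comp_rassoc eq4 comp_rassoc sqR /h -comp_rassoc -(comp_rassoc ga) ga2 comp1l).
exists A, C'', SA, SB'', SC'', R'', R1, R2, i1'', d1'', i2'', d2'', a1, a2, a1', a2',
  y1, y2, y1', y2', z1, z2, z1', z2'.
exists k'', q'', (y1 ⊚ m1 + y2 ⊚ m2), rho'', al, (idm C'').
split; [by split | by split | by split => //; split => //; exact: iso_id | ].
split.
- by rewrite /dsum; as_rule mk1; as_rule mk2; biproduct_rules Hy; comp_solve.
- rewrite /dsum; as_rule dm1; as_rule dm2; biproduct_rules Hy; biproduct_rules Hz.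
  by comp_solve.
- apply: (pullback_unique pb).
  + by rewrite -comp_rassoc grho comp_rassoc gk eq3 -!comp_rassoc gi.
  + by rewrite -comp_rassoc drho qk -!comp_rassoc di !comp0l.
- by rewrite drho comp1l.
Qed.

(* Direct sum of two presentations: the sum of eta1 + eta2 and eta1' + eta2'
   is presented by (eta1 (+) eta1') + (eta2 (+) eta2'), using the interchange
   isomorphisms between the iterated biproducts. *)
Lemma presentation_dsum A B C A' B' C' (i : HomC A B) (d : HomC B C)
    (i' : HomC A' B') (d' : HomC B' C') :
  baer_presentation Emax Wa Wb i d -> baer_presentation Emax Wa Wb i' d' ->
  forall (SA SB SC : K) (a1 : HomC A SA) (a2 : HomC A' SA) a1' a2'
    (b1 : HomC B SB) (b2 : HomC B' SB) b1' b2' (c1 : HomC C SC) (c2 : HomC C' SC) c1' c2',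
  is_biproduct a1 a2 a1' a2' -> is_biproduct b1 b2 b1' b2' -> is_biproduct c1 c2 c1' c2' ->
  baer_presentation Emax Wa Wb (dsum a1 a2 a1' a2' b1 b2 b1' b2' i i')
                               (dsum b1 b2 b1' b2' c1 c2 c1' c2' d d').
Proof.
move=> H0 H1 SA SB SC a1 a2 a1' a2' b1 b2 b1' b2' c1 c2 c1' c2' Ha Hb Hc.
have [_ Kb] := Kadd; have [_ _ dsa _ _] := wa; have [_ _ dsb _ _] := wb.
move: H0 => [A0 [C0 [SA0 [SB0 [SC0 [R0 [B10 [B20 [i10 [d10 [i20 [d20 [a10 [a20 [a10'
  [a20' [b10 [b20 [b10' [b20' [c10 [c20 [c10' [c20' [k0 [q0 [r0 [rho0 [al0 [ga0
  [[Wi10 Wi20] [Ha0 Hb0 Hc0] [Ez0 [ial0 iga0]] [eq10 eq20 eq30 eq40]]]]]]]]]]]]]]]]]]]]]]]]]]]]]]]].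
move: H1 => [A1 [C1 [SA1 [SB1 [SC1 [R1 [B11 [B21 [i11 [d11 [i21 [d21 [a11 [a21 [a11'
  [a21' [b11 [b21 [b11' [b21' [c11 [c21 [c11' [c21' [k1 [q1 [r1 [rho1 [al1 [ga1
  [[Wi11 Wi21] [Ha1 Hb1 Hc1] [Ez1 [ial1 iga1]] [eq11 eq21 eq31 eq41]]]]]]]]]]]]]]]]]]]]]]]]]]]]]]]].
have [X0 [x1 [x2 [x1' [x2' Hx]]]]] := Kb A0 A1.
have [Y0 [w1 [w2 [w1' [w2' Hw]]]]] := Kb C0 C1.
have [E1 [f1 [f2 [f1' [f2' Hf]]]]] := Kb B10 B11.
have [E2 [g1 [g2 [g1' [g2' Hg]]]]] := Kb B20 B21.
have [U [u1 [u2 [u1' [u2' Hu]]]]] := Kb SA0 SA1.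
have [V [v1 [v2 [v1' [v2' Hv]]]]] := Kb SB0 SB1.
have [Wc [o1 [o2 [o1' [o2' Ho]]]]] := Kb SC0 SC1.
have [RR [rr1 [rr2 [rr1' [rr2' Hrr]]]]] := Kb R0 R1.
exists X0, Y0, U, V, Wc, RR, E1, E2.
do 16 eexists.
exists (dsum u1 u2 u1' u2' rr1 rr2 rr1' rr2' k0 k1), (dsum rr1 rr2 rr1' rr2' w1 w2 w1' w2' q0 q1).
exists (dsum rr1 rr2 rr1' rr2' v1 v2 v1' v2' r0 r1), (dsum rr1 rr2 rr1' rr2' b1 b2 b1' b2' rho0 rho1).
exists (dsum x1 x2 x1' x2' a1 a2 a1' a2' al0 al1), (dsum w1 w2 w1' w2' c1 c2 c1' c2' ga0 ga1).
split.
- split; [exact: dsa _ _ _ _ _ _ _ _ _ _ Wi10 Wi11 _ _ _ _ _ _ _ _ _ _ _ _ _ _ _ Hx Hf Hw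
         | exact: dsb _ _ _ _ _ _ _ _ _ _ Wi20 Wi21 _ _ _ _ _ _ _ _ _ _ _ _ _ _ _ Hx Hg Hw].
- split; [exact: (biproduct_interchange Hx Hx Ha0 Ha1 Hu)
         | exact: (biproduct_interchange Hf Hg Hb0 Hb1 Hv)
         | exact: (biproduct_interchange Hw Hw Hc0 Hc1 Ho)].
- split; first exact: (dsE Ez0 Ez1 Hu Hrr Hw).
  by split; apply: dsum_iso.
split.
- by rewrite dsum_comp // eq10 eq11; apply: dsum_interchange.
- rewrite -dsum_interchange // dsum_comp // eq20 eq21.
  by rewrite (diagonal_interchange w1 w2 _ _ _ _ _ _ _ _ o1' o2') dsum_comp.
- rewrite dsum_comp // eq30 eq31 dsum_comp //.
  by rewrite (codiagonal_interchange _ _ x1' x2' _ _ _ _ u1 u2) dsum_comp.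
- by rewrite !dsum_comp // eq40 eq41.
Qed.

End Closure.

Lemma sum_class_least (K : PreAdditive) (W1 W2 V : seqclass K) :
  kc_class V -> iso_closed V -> dsum_closed V -> E2 V -> E2op V ->
  subclass W1 V -> subclass W2 V -> subclass (sum_class W1 W2) V.
Proof.
move=> kcV icV dsV e2V e2oV s1 s2 A' B' C' i' d'.
move=> [A [B1 [B2 [C [Q [i1 [d1 [i2 [d2 [iQ [dQ [Wi1 Wi2 baer isq]]]]]]]]]]]].
move: baer => [SA [SB [SC [a1 [a2 [a1' [a2' [b1 [b2 [b1' [b2' [c1 [c2 [c1' [c2'
  [Ha Hb Hc [P [j [e [pos pbs]]]]]]]]]]]]]]]]]]]].
have Veta := dsV _ _ _ _ _ _ _ _ _ _ (s1 _ _ _ _ _ Wi1) (s2 _ _ _ _ _ Wi2)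
  _ _ _ _ _ _ _ _ _ _ _ _ _ _ _ Ha Hb Hc.
have Vje := pushout_seq_mem kcV icV e2V Veta pos.
exact: icV _ _ _ _ _ _ _ _ _ _ (pullback_seq_mem kcV icV e2oV Vje pbs) isq.
Qed.

Section SumClass.
Variable K : PreAdditive.
Variables Emax W1 W2 : seqclass K.
Hypothesis Kadd : is_additive K.
Hypothesis kcE : kc_class Emax.
Hypothesis icE : iso_closed Emax.
Hypothesis e2E : E2 Emax.
Hypothesis e2oE : E2op Emax.
Hypothesis dsE : dsum_closed Emax.
Hypothesis w1 : weakly_exact W1.
Hypothesis w2 : weakly_exact W2.
Hypothesis s1 : subclass W1 Emax.
Hypothesis s2 : subclass W2 Emax.

(* A presented kernel-cokernel pair is isomorphic to the Baer sum of its
   eta1, eta2: both are pushouts of xi along nabla, up to isomorphism. *)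
Lemma presentation_sum_class A' B' C' (i' : HomC A' B') (d' : HomC B' C') :
  baer_presentation Emax W1 W2 i' d' -> kc_pair i' d' -> sum_class W1 W2 A' B' C' i' d'.
Proof.
move=> H kc'; presentation_cases H.
have Eeta := dsE (s1 Wi1) (s2 Wi2) Ha Hb Hc.
have [P [j [e [pos Eje]]]] := pushout_seq_exists kcE icE e2E (a1' + a2') Eeta.
have [Q [iQ [dQ [pbs EQ]]]] := pullback_seq_exists kcE icE e2oE (c1 + c2) Eje.
have [[qk _] _] := kcE Ez.
have [t [tk dt]] := hom_into_pushout_pullback pos pbs qk eq1 eq2.
exists A, B1, B2, C, Q, i1, d1, i2, d2, iQ, dQ; split => //.
- by exists SA, SB, SC, a1, a2, a1', a2', b1, b2, b1', b2', c1, c2, c1', c2'; split => //;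
    exists P, j, e.
- have tk' : t ⊚ k = iQ ⊚ idm A ⊚ (a1' + a2') by rewrite comp1r.
  have dt' : dQ ⊚ t = idm C ⊚ q by rewrite comp1l.
  exact: (iso_seq_of_common_source kcE icE e2E e2oE Ez (kcE EQ) kc' (iso_id A)
    (iso_id C) ial iga tk' dt' eq3 eq4).
Qed.

(* Conversely, a Baer sum is presented by xi = (eta1 (+) eta2) Delta_C. *)
Lemma sum_class_presentation A' B' C' (i' : HomC A' B') (d' : HomC B' C') :
  sum_class W1 W2 A' B' C' i' d' -> baer_presentation Emax W1 W2 i' d'.
Proof.
move=> [A [B1 [B2 [C [Q [i1 [d1 [i2 [d2 [iQ [dQ [Wi1 Wi2 baer isq]]]]]]]]]]]].
move: baer => [SA [SB [SC [a1 [a2 [a1' [a2' [b1 [b2 [b1' [b2' [c1 [c2 [c1' [c2'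
  [Ha Hb Hc [P [j [e [pos pbs]]]]]]]]]]]]]]]]]]]].
move: isq => [al [b [ga [ial ib iga e1 e2]]]].
have Eeta := dsE (s1 Wi1) (s2 Wi2) Ha Hb Hc.
have [R [k [q [[gR [pbR gk qk]] Ez]]]] := pullback_seq_exists kcE icE e2oE (c1 + c2) Eeta.
have [sqR _] := pbR.
have [rQ [rk drQ]] := hom_into_pushout_pullback pos pbs qk gk sqR.
exists A, C, SA, SB, SC, R, B1, B2, i1, d1, i2, d2, a1, a2, a1', a2', b1, b2, b1', b2',
  c1, c2, c1', c2', k, q, gR, (b ⊚ rQ), al, ga.
split => //; split => //.
- by rewrite comp_rassoc rk -comp_rassoc e1.
- by rewrite -comp_rassoc -e2 comp_rassoc drQ.
Qed.

Lemma sum_class_sub : subclass (sum_class W1 W2) Emax.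
Proof. exact: (sum_class_least kcE icE dsE e2E e2oE s1 s2). Qed.

Lemma sum_class_contains_left : subclass W1 (sum_class W1 W2).
Proof.
move=> A B C i d Wi; apply: presentation_sum_class; last exact: kcE (s1 Wi).
exact: (presentation_of_member Kadd kcE dsE w2 s2 Wi (s1 Wi)).
Qed.

Lemma sum_class_contains_right : subclass W2 (sum_class W1 W2).
Proof.
move=> A B C i d Wi; apply: presentation_sum_class; last exact: kcE (s2 Wi).
exact: (presentation_swap (presentation_of_member Kadd kcE dsE w1 s1 Wi (s2 Wi))).
Qed.

Lemma sum_class_iso_closed : iso_closed (sum_class W1 W2).
Proof.
move=> A B C A' B' C' i d i' d' Si isq.
have Ei' := icE (sum_class_sub Si) isq.
exact: (presentation_sum_class (presentation_iso (sum_class_presentation Si) isq) (kcE Ei')).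
Qed.

Lemma sum_class_dsum_closed : dsum_closed (sum_class W1 W2).
Proof.
move=> A B C A' B' C' i d i' d' Si Si' SA SB SC a1 a2 a1' a2' b1 b2 b1' b2'
  c1 c2 c1' c2' Ha Hb Hc.
apply: presentation_sum_class.
- exact: (presentation_dsum Kadd dsE w1 w2 (sum_class_presentation Si)
    (sum_class_presentation Si') Ha Hb Hc).
- exact: kcE (dsE (sum_class_sub Si) (sum_class_sub Si') Ha Hb Hc).
Qed.

Lemma sum_class_E2 : E2 (sum_class W1 W2).
Proof.
move=> A B i [C [d Si]] A' f.
have Ei := sum_class_sub Si.
split; first exact: (e2E (ex_intro _ C (ex_intro _ d Ei)) f).1.
move=> P i' f' po.
have [[di _] _] := kcE Ei.
have [e [ef ej]] := pushout_factor po (u := d) (v := 0) ltac:(by rewrite di comp0l).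
have pos : pushout_seq i d f i' e by exists f'.
exists C, e; apply: presentation_sum_class.
- exact: (presentation_pushout Kadd kcE icE e2E w1 w2 (sum_class_presentation Si) pos).
- exact: kcE (pushout_seq_mem kcE icE e2E Ei pos).
Qed.

Lemma sum_class_E2op : E2op (sum_class W1 W2).
Proof.
move=> B C d [A [i Si]] C' g.
have Ei := sum_class_sub Si.
split; first exact: (e2oE (ex_intro _ A (ex_intro _ i Ei)) g).1.
move=> Q d' g' pb.
have [[di _] _] := kcE Ei.
have [i' [gi di']] := pullback_factor pb (u := i) (v := 0) ltac:(by rewrite di comp0r).
have pbs : pullback_seq i d g i' d' by exists g'.
exists A, i'; apply: presentation_sum_class.
- exact: (presentation_pullback Kadd kcE icE e2oE w1 w2 (sum_class_presentation Si) pbs).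
- exact: kcE (pullback_seq_mem kcE icE e2oE Ei pbs).
Qed.

Lemma sum_class_weakly_exact : weakly_exact (sum_class W1 W2).
Proof.
have [_ _ _ [e01 e0o1] _] := w1.
split; first (by move=> A B C i d Si; exact: kcE (sum_class_sub Si)).
- exact: sum_class_iso_closed.
- exact: sum_class_dsum_closed.
- split=> [A | C].
  + by have [C [d Wd]] := e01 A; exists C, d; exact: sum_class_contains_left.
  + by have [A [i Wi]] := e0o1 C; exists A, i; exact: sum_class_contains_left.
- by split; [exact: sum_class_E2 | exact: sum_class_E2op].
Qed.

End SumClass.

Theorem mainTheorem15 (K : PreAdditive) (Kadd : is_additive K)
    (Emax W1 W2 : seqclass K) :
  is_max_exact Emax ->
  weakly_exact W1 -> weakly_exact W2 ->
  subclass W1 Emax -> subclass W2 Emax ->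
  weakly_exact (sum_class W1 W2) /\
  (forall (A B C : K) (i : HomC A B) (d : HomC B C),
      sum_class W1 W2 A B C i d <->
      (forall V : seqclass K, weakly_exact V -> subclass W1 V -> subclass W2 V ->
          V A B C i d)).
Proof.
(* only the exactness of E_max is used, not its maximality *)
move=> [exE _] w1 w2 s1 s2.
have [kcE icE dsE _ [e2E e2oE]] := exact_weakly_exact Kadd exE.
have wS := sum_class_weakly_exact Kadd kcE icE e2E e2oE dsE w1 w2 s1 s2.
split => // A B C i d; split.
- move=> Si V [kcV icV dsV _ [e2V e2oV]] v1 v2.
  exact: (sum_class_least kcV icV dsV e2V e2oV v1 v2 Si).
- move=> inV; apply: inV => //.
  + exact: (sum_class_contains_left Kadd kcE icE e2E e2oE dsE w2 s1 s2).
  + exact: (sum_class_contains_right Kadd kcE icE e2E e2oE dsE w1 s1 s2).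
Qed.
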